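(* Let $r,i\in\mathbb{Z}$ and $\beta\in\Bbbk^*$. Then for all $0\le l\le k$, $$c_\beta^{r,i}(k,l)=\lambda_\beta^i(k,l)\,y^{k-l}x^rg^{i-k}.$$
   Context: $\Bbbk$ is an algebraically closed field of characteristic $0$; $n,w$ positive integers, $\gamma$ a primitive $n$-th root of unity. $H=B(n,w,\gamma)$ is the Hopf algebra generated by $x^{\pm1},g,y$ with relations $xx^{-1}=x^{-1}x=1$, $xg=gx$, $xy=yx$, $yg=\gamma gy$, $y^n=1-x^w=1-g^n$, with $\Delta(x)=x\otimes x$, $\Delta(g)=g\otimes g$, $\Delta(y)=y\otimes g+1\otimes y$, $\varepsilon(x)=\varepsilon(g)=1$, $\varepsilon(y)=0$, $S(x)=x^{-1}$, $S(g)=g^{-1}$, $S(y)=-yg^{-1}$. The elements $c_\beta^{r,i}(k,l)\in H$ ($0\le l\le k$) are defined by $c_\beta^{r,i}(0,0)=x^rg^i$ and, for $k\ge0$: $c_\beta^{r,i}(k+1,0)=c_\beta^{r,i}(k,0)S(y)+\beta yc_\beta^{r,i}(k,0)S(g)$; for $0<l<k+1$, $c_\beta^{r,i}(k+1,l)=c_\beta^{r,i}(k,l)S(y)+\beta\gamma^{-l}yc_\beta^{r,i}(k,l)S(g)+c_\beta^{r,i}(k,l-1)S(g)$; $c_\beta^{r,i}(k+1,k+1)=c_\beta^{r,i}(k,k)S(g)$. The scalars: $R_\beta^i(k,l)=\beta\gamma^{-l}-\gamma^{k-1-i}$ for $0\le l<k$ and $R_\beta^i(k,k)=1$; $\lambda_\beta^i(0,0)=1$,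 and for $k\ge1$: $\lambda_\beta^i(k,0)=R_\beta^i(k,0)\lambda_\beta^i(k-1,0)$, $\lambda_\beta^i(k,l)=R_\beta^i(k,l)\lambda_\beta^i(k-1,l)+\lambda_\beta^i(k-1,l-1)$ for $0<l<k$, $\lambda_\beta^i(k,k)=1$. *)

From HB Require Import structures.
From mathcomp Require Import all_boot all_order all_algebra all_field.
Set Implicit Arguments. Unset Strict Implicit. Unset Printing Implicit Defensive.
Import Order.TTheory GRing.Theory Num.Theory.
Local Open Scope ring_scope.

(* Relations of B(n,w,gamma), stated for elements x, g, y of a K-algebra A. *)
Definition Bnwg_relations (K : fieldType) (A : unitAlgType K)
  (n w : nat) (gamma : K) (x g y : A) : Prop :=
  x \is a GRing.unit /\ g \is a GRing.unit /\
  x * g = g * x /\ x * y = y * x /\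
  y * g = gamma *: (g * y) /\
  y ^+ n = 1 - x ^+ w /\ 1 - x ^+ w = 1 - g ^+ n.

(* Antipode values: S(y) = - y g^{-1}, S(g) = g^{-1}. *)
Definition Sy (K : fieldType) (A : unitAlgType K) (g y : A) : A := - (y * g^-1).
Definition Sg (K : fieldType) (A : unitAlgType K) (g : A) : A := g^-1.

(* c_beta^{r,i}(k,l); values for l > k are irrelevant. *)
Fixpoint cbeta (K : fieldType) (A : unitAlgType K) (gamma beta : K)
  (x g y : A) (r i : int) (k : nat) (l : nat) {struct k} : A :=
  match k with
  | 0 => x ^ r * g ^ i
  | k'.+1 =>
      if l == 0%N then
        cbeta gamma beta x g y r i k' 0 * Sy g y
        + beta *: (y * cbeta gamma beta x g y r i k' 0 * Sg g)
      else if l == k'.+1 then cbeta gamma beta x g y r i k' k' * Sg g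
      else cbeta gamma beta x g y r i k' l * Sy g y
           + (beta * gamma ^- l) *: (y * cbeta gamma beta x g y r i k' l * Sg g)
           + cbeta gamma beta x g y r i k' l.-1 * Sg g
  end.

Definition Rbeta (K : fieldType) (gamma beta : K) (i : int) (k l : nat) : K :=
  if (l < k)%N then beta * gamma ^- l - gamma ^ (k%:Z - 1 - i) else 1.

(* lambda_beta^i(k,l); values for l > k are irrelevant. *)
Fixpoint lambda (K : fieldType) (gamma beta : K) (i : int) (k l : nat)
  {struct k} : K :=
  match k with
  | 0 => 1
  | k'.+1 =>
      if l == 0%N then Rbeta gamma beta i k 0 * lambda gamma beta i k' 0
      else if l == k'.+1 then 1
      else Rbeta gamma beta i k l * lambda gamma beta i k' l
           + lambda gamma beta i k' l.-1
  end.

From HB Require Import structures.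
From mathcomp Require Import all_boot all_order all_algebra all_field.
From mathcomp Require Import ring.
Import Order.TTheory GRing.Theory Num.Theory.
Local Open Scope ring_scope.

(* Proof idea: multiplying a monomial y^a x^r g^b on the right by S(y) or
   S(g), or on the left by y, gives back a scalar multiple of a monomial of
   the same shape, since x commutes with y and g y = gamma^-1 y g.
   Hence c(k,l) is a multiple of y^(k-l) x^r g^(i-k), and comparing the
   recursions shows that the scalars satisfy the recursion defining
   lambda(k,l). *)

Section SkewCommutation.
Context {K : fieldType} {A : unitAlgType K}.

Lemma skew_commrX {q : K} {a b : A} (p : nat) :
  a * b = q *: (b * a) -> a ^+ p * b = q ^+ p *: (b * a ^+ p).
Proof.
move=> skew_ab; elim: p => [|p IHp].
  by rewrite !expr0 mul1r mulr1 scale1r.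
rewrite exprS -mulrA IHp -scalerAr (mulrA a b) skew_ab -scalerAl scalerA.
by rewrite -exprSr -mulrA -exprS.
Qed.

Lemma skew_commrXz {q : K} {a b : A} (m : int) :
  a \is a GRing.unit -> q != 0 -> a * b = q *: (b * a) ->
  a ^ m * b = q ^ m *: (b * a ^ m).
Proof.
move=> ua q0 skew_ab.
have skew_Vab : a^-1 * b = q^-1 *: (b * a^-1).
  have skew_baV : b * a^-1 = q *: (a^-1 * b).
    by rewrite -{1}(mulKr ua b) skew_ab -scalerAr -scalerAl mulrA mulrK.
  by rewrite skew_baV scalerA mulVf // scale1r.
case: m => p; first exact: skew_commrX.
by rewrite NegzE -!exprz_inv -!exprnP (skew_commrX p.+1 skew_Vab).
Qed.

End SkewCommutation.

Section Monomials.
Variables (K : fieldType) (A : unitAlgType K) (gamma beta : K) (x g y : A).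
Hypotheses (ug : g \is a GRing.unit) (gamma_neq0 : gamma != 0).
Hypotheses (xy : x * y = y * x) (yg : y * g = gamma *: (g * y)).
Variables (r i : int).

Definition monomial (k l : nat) : A := y ^+ (k - l) * x ^ r * g ^ (i - k%:Z).

Lemma expgz_subS (k : nat) : g ^ (i - k.+1%:Z) = g ^ (i - k%:Z) * g^-1.
Proof. by rewrite -exprN1 -exprzDr // -addn1 PoszD opprD addrA. Qed.

Lemma monomial_mulSy (k l : nat) : (l <= k)%N ->
  monomial k l * Sy g y = - gamma ^ (k%:Z - i) *: monomial k.+1 l.
Proof.
move=> lk; rewrite /monomial /Sy mulrN scaleNr; congr (- _).
have gy : g ^ (i - k%:Z) * y = gamma ^ (k%:Z - i) *: (y * g ^ (i - k%:Z)).
  have yg' : g * y = gamma^-1 *: (y * g).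
    by rewrite yg scalerA mulVf // scale1r.
  by rewrite (skew_commrXz _ ug _ yg') ?invr_eq0 // exprz_inv opprB.
have xry : x ^ r * y = y * x ^ r by apply/esym/commrXz.
rewrite !mulrA -(mulrA _ (g ^ _) y) gy -scalerAr -!scalerAl; congr (_ *: _).
rewrite (mulrA _ y) -(mulrA _ (x ^ r) y) xry mulrA -exprSr -subSn //.
by rewrite expgz_subS !mulrA.
Qed.

Lemma mulyl_monomial_Sg (k l : nat) : (l <= k)%N ->
  y * monomial k l * Sg g = monomial k.+1 l.
Proof.
by move=> lk; rewrite /monomial /Sg !mulrA -exprS -subSn // expgz_subS !mulrA.
Qed.

Lemma monomial_mulSg (k l : nat) : monomial k l * Sg g = monomial k.+1 l.+1.
Proof. by rewrite /monomial /Sg subSS expgz_subS !mulrA. Qed.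

Lemma lambda_diag (k : nat) : lambda gamma beta i k k = 1.
Proof. by case: k => //= k; rewrite eqxx. Qed.

Lemma Rbeta_ltS (k l : nat) : (l <= k)%N ->
  Rbeta gamma beta i k.+1 l = beta * gamma ^- l - gamma ^ (k%:Z - i).
Proof. by move=> lk; rewrite /Rbeta ltnS lk -addn1 PoszD addrK. Qed.

Lemma cbeta_monomial (k l : nat) : (l <= k)%N ->
  cbeta gamma beta x g y r i k l = lambda gamma beta i k l *: monomial k l.
Proof.
elim: k l => [|k IHk] [|l] lk.
- by rewrite /= scale1r /monomial mul1r subr0.
- by [].
- rewrite /= IHk // -scalerAl monomial_mulSy // -scalerAr -scalerAl.
  rewrite mulyl_monomial_Sg // !scalerA -scalerDl Rbeta_ltS //.
  by rewrite expr0 invr1 mulr1; congr (_ *: _); ring.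
- rewrite /= eqSS; have [->|neq_lk] := eqVneq l k.
    by rewrite IHk // lambda_diag -scalerAl monomial_mulSg.
  have lk' : (l < k)%N by rewrite ltn_neqAle neq_lk -ltnS.
  rewrite !IHk ?(ltnW lk') // -!scalerAl monomial_mulSy // -scalerAr -scalerAl.
  rewrite mulyl_monomial_Sg // monomial_mulSg !scalerA -!scalerDl Rbeta_ltS //.
  by congr (_ *: _); ring.
Qed.
End Monomials.

Theorem proposition3p11
  (K : closedFieldType) (hK : [pchar K] =i pred0)
  (n w : nat) (hn : (0 < n)%N) (hw : (0 < w)%N)
  (gamma : K) (hgamma : n.-primitive_root gamma)
  (A : unitAlgType K) (x g y : A)
  (hrel : Bnwg_relations n w gamma x g y)
  (r i : int) (beta : K) (hbeta : beta != 0)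
  (k l : nat) (hlk : (l <= k)%N) :
  cbeta gamma beta x g y r i k l
  = lambda gamma beta i k l *: (y ^+ (k - l) * x ^ r * g ^ (i - k%:Z)).
Proof.
have [_ [ug [_ [xy [yg _]]]]] := hrel.
have gamma_neq0 : gamma != 0 by rewrite (prim_root_eq0 hgamma) -lt0n.
exact: cbeta_monomial.
Qed.
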